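(* Let $p>3$ be prime. For $t\in\mathbb{Z}/p\mathbb{Z}$ put $a_t(p)=-\sum_{x\bmod p}\left(\frac{x^3+t^2}{p}\right)$ and $A_2(p)=\sum_{t\bmod p}a_t(p)^2$. Then $A_2(p)=2p^2-2p$ if $p\equiv 1\pmod 3$, and $A_2(p)=0$ if $p\equiv 2 \pmod 3$.
   Context: $\left(\frac{\cdot}{p}\right)$ denotes the Legendre symbol (equal to $0$ at multiples of $p$). *)

From mathcomp Require Import all_boot all_order all_algebra.
Set Implicit Arguments. Unset Strict Implicit. Unset Printing Implicit Defensive.
Import GRing.Theory Num.Theory.
Local Open Scope ring_scope.

Definition legendre (p : nat) (a : int) : int :=
  if (p%:Z %| a)%Z then 0
  else if [exists x : 'I_p, ((x%:Z ^+ 2 - a) %% p%:Z)%Z == 0] then 1 else -1.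

Definition a_t (p : nat) (t : int) : int :=
  - \sum_(x < p) legendre p ((x%:Z) ^+ 3 + t ^+ 2).

Definition A2 (p : nat) : int := \sum_(t < p) (a_t p t%:Z) ^+ 2.

From mathcomp Require Import all_boot all_order all_algebra.
From mathcomp Require Import cyclic finfield.
From mathcomp Require Import zify ring.
Set Implicit Arguments. Unset Strict Implicit. Unset Printing Implicit Defensive.
Import GRing.Theory Num.Theory.
Local Open Scope ring_scope.

(* Write χ for the quadratic character of F_q (q odd) and S(D) = Σ_x χ(x³ + D), so that
   a_t = -S(t²).  Since t ↦ t² takes the value D exactly 1 + χ(D) times,
   Σ_t S(t²)² = Σ_D S(D)² + Σ_D χ(D) S(D)², and the twisted sum vanishes because
   S(c³D) = χ(c) S(D) while some c is a non-square.  Expanding the square with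
   Σ_D χ(D + a) χ(D + b) = q[a = b] - 1 gives Σ_D S(D)² = q·#{(x, y) : x³ = y³} - q², and
   #{x³ = y³} = 1 + (q - 1) r, where the number r of cube roots of unity is 3 or 1 according
   as 3 divides q - 1 or not. *)

Lemma sum_indicator1 (T : finType) (y : T) : \sum_(t : T) ((t == y)%:R : int) = 1.
Proof. by rewrite (bigD1 y) //= eqxx big1 ?addr0 // => t /negbTE ->. Qed.

Lemma sum_one (T : finType) : \sum_(t : T) (1 : int) = #|T|%:Z.
Proof. by rewrite sumr_const natz. Qed.

Lemma sum_indicator_card (T : finType) (P : pred T) :
  \sum_(t : T) ((P t)%:R : int) = #|P|%:Z.
Proof.
rewrite -sum1_card -natz natr_sum [RHS]big_mkcond /=.
by apply: eq_bigr => t _; rewrite -topredE /=; case: (P t).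
Qed.

Section CharacterSums.
Variable F : finFieldType.
Local Notation q := #|F|.

Lemma expf_card_pred (y : F) : y != 0 -> y ^+ q.-1 = 1.
Proof.
move=> y0; apply: (mulfI y0).
by rewrite -exprS prednK ?expf_card ?mulr1 // (ltnW (finNzRing_gt1 _)).
Qed.

Lemma exists_prim_root : exists g : F, q.-1.-primitive_root g.
Proof.
have : has q.-1.-primitive_root (enum (predC1 (0 : F))).
  apply: has_prim_root; last by rewrite -cardE cardC1.
  - by rewrite -ltnS prednK ?finNzRing_gt1 // (ltnW (finNzRing_gt1 _)).
  - by apply/allP => x; rewrite mem_enum unity_rootE => /expf_card_pred ->.
  - exact: enum_uniq.
by case/hasP=> g _ pg; exists g.
Qed.

Hypothesis two_neq0 : (2%:R : F) != 0.

Lemma card_pred_even : ~~ odd q.-1.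
Proof.
apply/negP => odd_m; have := @expf_card_pred (-1); rewrite oppr_eq0 oner_eq0.
rewrite -signr_odd odd_m expr1 => /(_ isT) /(congr1 (fun z => 1 - z)).
by rewrite opprK subrr -mulr2n => /eqP; rewrite (negbTE two_neq0).
Qed.

Lemma half_card_predK : (q.-1./2 * 2 = q.-1)%N.
Proof. by rewrite muln2 -[RHS]odd_double_half (negbTE card_pred_even). Qed.

Lemma half_card_pred_gt0 : (0 < q.-1./2)%N.
Proof.
have q_gt1 : (1 < q)%N := finNzRing_gt1 F; have m_half := half_card_predK; lia.
Qed.

Lemma prim_root_half_card (g : F) : q.-1.-primitive_root g -> g ^+ q.-1./2 = -1.
Proof.
move=> pg; have : (g ^+ q.-1./2) ^+ 2 == 1.
  by rewrite -exprM half_card_predK prim_expr_order.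
rewrite sqrf_eq1 => /orP[|/eqP //]; rewrite -(prim_order_dvd pg).
have h_gt0 := half_card_pred_gt0; have m_half := half_card_predK.
by move=> /(dvdn_leq h_gt0); lia.
Qed.

Definition qchar (x : F) : int :=
  if x == 0 then 0 else if [exists y, y ^+ 2 == x] then 1 else -1.

Lemma qchar0 : qchar 0 = 0.
Proof. by rewrite /qchar eqxx. Qed.

Lemma qchar1 : qchar 1 = 1.
Proof. by rewrite /qchar oner_eq0; case: existsP => // -[]; exists 1; rewrite expr1n. Qed.

Lemma qchar_sqr x : x != 0 -> qchar x ^+ 2 = 1.
Proof. by rewrite /qchar => /negbTE ->; case: ifP. Qed.

Lemma qchar_sign x : qchar x \in [:: 0; 1; -1].
Proof. by rewrite /qchar; case: (x == 0); last case: [exists _, _]. Qed.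

Lemma intr_sign_inj (a b : int) : a \in [:: 0; 1; -1] -> b \in [:: 0; 1; -1] ->
  a%:~R = b%:~R :> F -> a = b.
Proof.
have one_neqN1 : (1 : F) != -1 by rewrite -subr_eq0 opprK -mulr2n.
rewrite !inE => /or3P[]/eqP-> /or3P[]/eqP-> //= /eqP;
  rewrite ?rmorphN ?rmorph1 ?rmorph0 ?(eq_sym 0) ?oppr_eq0 ?oner_eq0 //.
- by rewrite (negbTE one_neqN1).
- by rewrite eq_sym (negbTE one_neqN1).
Qed.

Lemma qchar_Euler x : (qchar x)%:~R = x ^+ q.-1./2.
Proof.
have [g pg] := exists_prim_root.
rewrite /qchar; case: eqP => [->|/eqP x0].
  by rewrite expr0n gtn_eqF ?half_card_pred_gt0.
case: existsP => [[y /eqP yx]|no_root]; first subst x.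
  have y0 : y != 0 by apply: contra x0 => /eqP ->; rewrite expr0n.
  by rewrite -exprM mulnC half_card_predK expf_card_pred.
have [i xi] := prim_rootP pg (expf_card_pred x0); subst x.
case odd_i : (odd i).
  by rewrite -exprM mulnC exprM prim_root_half_card // -signr_odd odd_i expr1.
case: no_root; exists (g ^+ i./2); rewrite -exprM.
by have := odd_double_half i; rewrite odd_i add0n -muln2 => ->.
Qed.

Lemma qcharM x y : qchar (x * y) = qchar x * qchar y.
Proof.
apply: intr_sign_inj; first exact: qchar_sign.
  by move: (qchar_sign x) (qchar_sign y); rewrite !inE => /or3P[]/eqP-> /or3P[]/eqP->.
by rewrite intrM !qchar_Euler exprMn.
Qed.

Lemma exists_nonsquare : exists c : F, qchar c = -1.
Proof.
have [g pg] := exists_prim_root; exists g.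
apply: intr_sign_inj; [exact: qchar_sign | by [] |].
by rewrite qchar_Euler prim_root_half_card // rmorphN rmorph1.
Qed.

Lemma sum_qchar : \sum_x qchar x = 0.
Proof.
have [c qchar_c] := exists_nonsquare.
have c0 : c != 0 by apply/eqP => c0; move: qchar_c; rewrite c0 qchar0.
have : \sum_x qchar x = - \sum_x qchar x.
  rewrite {1}(reindex_inj (mulfI c0)) -sumrN.
  by apply: eq_bigr => x _; rewrite qcharM qchar_c mulN1r.
by lia.
Qed.

Lemma sum_qchar_mul_shift k : k != 0 -> \sum_x qchar x * qchar (x + k) = -1.
Proof.
(* x ↦ 1 + k/x (with 0 ↦ 1) permutes F, and χ(x) χ(x + k) = χ(x² (1 + k/x)) for x ≠ 0. *)
move=> k0; pose f x := if x == 0 then 1 else 1 + k / x.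
have f_inj : injective f.
  have f_neq1 u : u != 0 -> 1 + k / u != 1.
    by move=> u0; rewrite -subr_eq0 addrAC subrr add0r mulf_neq0 ?invr_eq0.
  move=> u v; rewrite /f.
  case: (eqVneq u 0) => [->|u0]; case: (eqVneq v 0) => [->|v0] //.
  - by move=> e; move: (f_neq1 v v0); rewrite -e eqxx.
  - by move=> e; move: (f_neq1 u u0); rewrite e eqxx.
  - by move/addrI/(mulfI k0)/invr_inj.
have qchar_shift x : qchar x * qchar (x + k) = qchar (f x) - (x == 0)%:R.
  rewrite /f; case: (eqVneq x 0) => [->|x0]; first by rewrite qchar0 mul0r qchar1 subrr.
  have -> : x + k = x * (1 + k / x) by rewrite mulrDr mulr1 mulrCA divff // mulr1.
  by rewrite subr0 qcharM mulrA -expr2 qchar_sqr // mul1r.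
under eq_bigr do rewrite qchar_shift.
rewrite sumrB -(reindex_inj f_inj (P := xpredT) (F := qchar)).
by rewrite sum_qchar sum_indicator1 sub0r.
Qed.

Lemma sum_qchar_mul_translates a b :
  \sum_x qchar (x + a) * qchar (x + b) = if a == b then q%:Z - 1 else -1.
Proof.
rewrite (reindex_inj (addIr (- a))) /=.
under eq_bigr do rewrite subrK -addrA [- a + b]addrC.
case: eqVneq => [->|ab]; last by apply: sum_qchar_mul_shift; rewrite subr_eq0 eq_sym.
rewrite subrr (eq_bigr (fun x => 1 - (x == 0)%:R)) ?sumrB ?sum_one ?sum_indicator1 // => x _.
case: eqVneq => [->|x0]; first by rewrite addr0 qchar0 mul0r subrr.
by rewrite addr0 -expr2 qchar_sqr // subr0.
Qed.

Lemma count_sqrt D : \sum_t ((t ^+ 2 == D)%:R : int) = 1 + qchar D.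
Proof.
rewrite /qchar; case: (eqVneq D 0) => [->|D0].
  by under eq_bigr do rewrite expf_eq0 /=; rewrite sum_indicator1 addr0.
case: existsP => [[y /eqP yD]|no_root]; last first.
  by rewrite big1 ?subrr // => t _; case: eqP => // t2D; case: no_root; exists t; apply/eqP.
subst D; have y0 : y != 0 by apply: contra D0 => /eqP ->; rewrite expr0n.
have y_neqN : y != - y by rewrite -addr_eq0 -mulr2n -mulr_natl mulf_neq0.
rewrite (eq_bigr (fun t => (t == y)%:R + (t == - y)%:R)) => [|t _].
  by rewrite big_split /= !sum_indicator1.
rewrite eqf_sqr; case: (eqVneq t y) => [->|_] /=; last by rewrite add0r.
by rewrite (negbTE y_neqN) addr0.
Qed.

Lemma sum_over_squares (f : F -> int) :
  \sum_t f (t ^+ 2) = \sum_D (1 + qchar D) * f D.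
Proof.
transitivity (\sum_t \sum_D ((t ^+ 2 == D)%:R * f D)).
  apply: eq_bigr => t _; rewrite (bigD1 (t ^+ 2)) //= eqxx mul1r big1 ?addr0 //.
  by move=> D; rewrite eq_sym => /negbTE ->; rewrite mul0r.
by rewrite exchange_big; apply: eq_bigr => D _; rewrite -mulr_suml count_sqrt.
Qed.

Definition cubic_sum (D : F) : int := \sum_x qchar (x ^+ 3 + D).

Definition ncube_roots1 : int := \sum_(u : F) ((u ^+ 3 == 1)%:R : int).

Lemma qchar_cube (c : F) : c != 0 -> qchar (c ^+ 3) = qchar c.
Proof. by move=> c0; rewrite exprS qcharM expr2 qcharM -expr2 qchar_sqr // mulr1. Qed.

Lemma cubic_sum_scale (c D : F) : c != 0 -> cubic_sum (c ^+ 3 * D) = qchar c * cubic_sum D.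
Proof.
move=> c0; rewrite /cubic_sum (reindex_inj (mulfI c0)) mulr_sumr.
by apply: eq_bigr => x _; rewrite exprMn -mulrDr qcharM qchar_cube.
Qed.

Lemma sum_qchar_mul_cubic_sum_sqr : \sum_D qchar D * cubic_sum D ^+ 2 = 0.
Proof.
have [c qchar_c] := exists_nonsquare.
have c0 : c != 0 by apply/eqP => c0; move: qchar_c; rewrite c0 qchar0.
have : \sum_D qchar D * cubic_sum D ^+ 2 = - \sum_D qchar D * cubic_sum D ^+ 2.
  have c3 : c ^+ 3 != 0 by rewrite expf_neq0.
  rewrite {1}(reindex_inj (mulfI c3)) -sumrN; apply: eq_bigr => D _.
  by rewrite cubic_sum_scale // qcharM qchar_cube // qchar_c; ring.
by lia.
Qed.

Lemma sum_cubic_sum_sqr : \sum_D cubic_sum D ^+ 2 =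
  q%:Z * \sum_(x : F) \sum_(y : F) ((x ^+ 3 == y ^+ 3)%:R : int) - q%:Z ^+ 2.
Proof.
transitivity (\sum_x \sum_y \sum_D qchar (D + x ^+ 3) * qchar (D + y ^+ 3)).
  rewrite /cubic_sum; under eq_bigr do rewrite expr2 mulr_suml.
  under eq_bigr do under eq_bigr do rewrite mulr_sumr.
  rewrite exchange_big; apply: eq_bigr => x _; rewrite exchange_big.
  by apply: eq_bigr => y _; apply: eq_bigr => D _; rewrite !(addrC D).
under eq_bigr do under eq_bigr do rewrite sum_qchar_mul_translates //.
rewrite mulr_sumr expr2 -sum_one mulr_sumr -sumrB; apply: eq_bigr => x _.
rewrite sum_one mulr_sumr mulr1 -[X in _ = _ - X]sum_one -sumrB.
by apply: eq_bigr => y _; case: eqP => _ /=; ring.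
Qed.

Lemma count_equal_cubes :
  \sum_(x : F) \sum_(y : F) ((x ^+ 3 == y ^+ 3)%:R : int) = 1 + (q%:Z - 1) * ncube_roots1.
Proof.
set r := ncube_roots1.
rewrite (eq_bigr (fun x => r * 1 + (x == 0)%:R * (1 - r))) => [|x _].
  by rewrite big_split /= -mulr_sumr -mulr_suml sum_one sum_indicator1; ring.
case: (eqVneq x 0) => [->|x0].
  rewrite expr0n /= (eq_bigr (fun y => (y == 0)%:R)) ?sum_indicator1 => [|y _]; first ring.
  by rewrite eq_sym expf_eq0.
have x3 : x ^+ 3 != 0 by rewrite expf_neq0.
rewrite /= mul0r addr0 mulr1 (reindex_inj (mulfI x0)); apply: eq_bigr => u _.
by rewrite exprMn -{1}[x ^+ 3]mulr1 (inj_eq (mulfI x3)) eq_sym.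
Qed.

Lemma sum_unity_root_prim n (w : F) : n.-primitive_root w ->
  \sum_(u : F) ((u ^+ n == 1)%:R : int) = n%:Z.
Proof.
move=> pw; rewrite (sum_indicator_card (fun u : F => u ^+ n == 1)).
have -> : #|(fun u : F => u ^+ n == 1)| = #|codom (fun i : 'I_n => w ^+ i)|.
  apply: eq_card => u; rewrite -topredE /=.
  apply/eqP/codomP => [/(prim_rootP pw)[i ->]|[i ->]]; first by exists i.
  by rewrite exprAC (prim_expr_order pw) expr1n.
rewrite card_codom ?card_ord // => i j eq_ij; apply/val_inj/eqP.
by have := eq_prim_root_expr pw i j; rewrite eq_ij eqxx !modn_small.
Qed.

Lemma ncube_roots1_coprime : ~~ (3 %| q.-1)%N -> ncube_roots1 = 1.
Proof.
move=> three_ndvd; rewrite -(sum_indicator1 (1 : F)); apply: eq_bigr => u _.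
suff -> : (u ^+ 3 == 1) = (u == 1) by [].
apply/eqP/eqP => [u3|->]; last by rewrite expr1n.
have u0 : u != 0 by apply: contra_eq_neq u3 => ->; rewrite expr0n eq_sym oner_neq0.
have [g pg] := exists_prim_root; have [i ui] := prim_rootP pg (expf_card_pred u0).
move: u3; rewrite ui -exprM => /eqP; rewrite -(prim_order_dvd pg) mulnC Gauss_dvdr.
  by rewrite (prim_order_dvd pg) => /eqP.
by rewrite coprime_sym prime_coprime.
Qed.

Lemma sum_cubic_sum_sqr_squares : \sum_t cubic_sum (t ^+ 2) ^+ 2 =
  if (3 %| q.-1)%N then 2 * q%:Z ^+ 2 - 2 * q%:Z else 0.
Proof.
rewrite (sum_over_squares (fun D => cubic_sum D ^+ 2)).
under eq_bigr do rewrite mulrDl mul1r.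
rewrite big_split /= sum_qchar_mul_cubic_sum_sqr addr0.
rewrite sum_cubic_sum_sqr count_equal_cubes.
case: ifPn => [three_dvd|three_ndvd]; last by rewrite ncube_roots1_coprime //; ring.
have [g pg] := exists_prim_root.
by rewrite /ncube_roots1 (sum_unity_root_prim (dvdn_prim_root pg three_dvd)); ring.
Qed.

End CharacterSums.

Section PrimeField.
Variable p : nat.
Hypothesis p_pr : prime p.
Local Notation F := ('F_p : finFieldType).

Lemma Fp_two_neq0 : (2 < p)%N -> (2%:R : F) != 0.
Proof.
by move=> p_gt2; rewrite -(dvdn_pcharf (pchar_Fp p_pr)); apply/negP => /dvdn_leq; lia.
Qed.

Lemma Fp_val_lt (y : F) : (val y < p)%N.
Proof. exact: leq_trans (ltn_ord y) (eq_leq (Fp_cast p_pr)). Qed.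

Lemma Fp_natr_val (y : F) : (val y)%:R = y.
Proof. by apply: val_inj; rewrite /= val_Fp_nat // modn_small // Fp_val_lt. Qed.

Lemma sum_ord_Fp (G : F -> int) : \sum_(x < p) G x%:R = \sum_(y : F) G y.
Proof.
have nat_Fp_bij : bijective (fun x : 'I_p => (x%:R : F)).
  exists (fun y : F => Ordinal (Fp_val_lt y)) => [x|y]; last exact: Fp_natr_val.
  by apply: val_inj; rewrite /= val_Fp_nat // modn_small.
by rewrite (reindex _ (onW_bij _ nat_Fp_bij)).
Qed.

Lemma legendre_qchar (z : int) : legendre p z = qchar (z%:~R : F).
Proof.
rewrite /legendre /qchar (dvdz_pcharf (pchar_Fp p_pr)); case: ifP => // _.
congr (if _ then _ else _); apply/existsP/existsP => [[x /eqP/dvdz_mod0P]|[y /eqP y2z]].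
  by rewrite (dvdz_pcharf (pchar_Fp p_pr)) rmorphB rmorphXn subr_eq0; exists x%:R.
exists (Ordinal (Fp_val_lt y)); apply/eqP/dvdz_mod0P.
rewrite (dvdz_pcharf (pchar_Fp p_pr)) rmorphB rmorphXn /= subr_eq0 -y2z.
by rewrite -[((val y)%:Z)%:~R]/((val y)%:R) Fp_natr_val.
Qed.

Lemma a_t_cubic_sum (t : int) : a_t p t = - cubic_sum (t%:~R ^+ 2 : F).
Proof.
rewrite /a_t /cubic_sum -(sum_ord_Fp (fun y => qchar (y ^+ 3 + (t%:~R ^+ 2 : F)))).
by congr (- _); apply: eq_bigr => x _; rewrite legendre_qchar rmorphD !rmorphXn.
Qed.

Lemma A2_cubic_sum : A2 p = \sum_(t : F) cubic_sum (t ^+ 2) ^+ 2.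
Proof.
rewrite /A2 -(sum_ord_Fp (fun t => cubic_sum (t ^+ 2) ^+ 2)).
by apply: eq_bigr => t _; rewrite a_t_cubic_sum sqrrN.
Qed.

End PrimeField.

Unset Implicit Arguments.
Theorem mainTheorem4 (p : nat) :
  prime p -> (3 < p)%N ->
  ((p %% 3 = 1)%N -> A2 p = 2 * (p%:Z) ^+ 2 - 2 * p%:Z) /\
  ((p %% 3 = 2)%N -> A2 p = 0).
Proof.
move=> p_pr p_gt3; have two_neq0 : (2%:R : 'F_p) != 0 by apply: Fp_two_neq0; lia.
rewrite (A2_cubic_sum p_pr) (sum_cubic_sum_sqr_squares two_neq0) card_Fp //.
split=> p_mod3.
- by have -> : (3 %| p.-1)%N by lia.
- by have -> : (3 %| p.-1)%N = false by lia.
Qed.
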